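(* Let $\kappa$ be a regular cardinal, $\lambda\le\kappa$, and let $X\subseteq\kappa^\kappa$ be a $(\kappa,\lambda)$-Borel$^*$ set. Then there is a $\kappa$-closed set $C\subseteq\kappa^\kappa\times\kappa^\kappa$ such that $X=\{\xi\mid\exists\eta\,(\xi,\eta)\in C\}$.
   Context: Basic $\kappa$-open sets: $N_\eta=\{\zeta\in\kappa^\kappa\mid\eta\subseteq\zeta\}$ for $\eta:X\to\kappa$, $X\subseteq\kappa$, $|X|<\kappa$, and $\emptyset$; in $\kappa^\kappa\times\kappa^\kappa$ they are products $N_\eta\times N_\xi$. A set is $\kappa$-open if it is a union of at most $\kappa$ basic $\kappa$-open sets, $\kappa$-closed if its complement is $\kappa$-open; $\kappa$-Borel sets form the smallest class containing the basic $\kappa$-open sets closed under complements and unions and intersections of at most $\kappa$ sets. A good labelled $(\kappa,\lambda)$-tree is a pair $(T,L)$ where $T$ is a (rooted) tree without branches of length $\kappa$, every element has at most $\kappa$ immediate successors, $|T|\le\lambda$, every increasing sequence in $T$ has a supremum in $T$, $L(t)\in\{\bigcup,\bigcap\}$ for non-leaves $t$, and $L(t)$ is a basic $\kappa$-open set for leaves $t$. Borel$^*$-game $GB(\xi,(T,L))$: the play starts at the root; at a non-leaf $t$, II chooses an immediate successor if $L(t)=\bigcup$, I chooses if $L(t)=\bigcap$; at limits the play moves to the supremum; the play ends at a leaf $t$ and II wins iff $\xi\in L(t)$. $(T,L)$ is a $(\kappa,\lambda)$-Borel$^*$-code if it is a good labelled $(\kappa,\lambda)$-tree and there is $\pi$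 with: (i) $\mathrm{dom}(\pi)$ a $\kappa$-closed subset of $\kappa^\kappa$ and each $\pi(\eta)$ a strategy of II; (ii) whenever II has a winning strategy in $GB(\xi,(T,L))$, some $\pi(\eta)$ is one; (iii) $\{(\xi,\eta)\mid\eta\in\mathrm{dom}(\pi),\ \pi(\eta)$ winning for II in $GB(\xi,(T,L))\}$ is $\kappa$-Borel. A set $X\subseteq\kappa^\kappa$ is $(\kappa,\lambda)$-Borel$^*$ if there is a $(\kappa,\lambda)$-Borel$^*$-code $(T,L)$ with $\xi\in X\iff$ II has a winning strategy in $GB(\xi,(T,L))$, for all $\xi\in\kappa^\kappa$. *)

Set Implicit Arguments.
Unset Strict Implicit.

Definition card_le {T U : Type} (A : T -> Prop) (B : U -> Prop) : Prop :=
  (forall x, ~ A x) \/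
  exists f : T -> U, (forall x, A x -> B (f x)) /\
                     (forall x y, A x -> A y -> f x = f y -> x = y).

Definition card_lt {T U : Type} (A : T -> Prop) (B : U -> Prop) : Prop :=
  card_le A B /\ ~ card_le B A.

Definition full (T : Type) : T -> Prop := fun _ => True.
Arguments full T _ : clear implicits.

Definition regular_cardinal {K : Type} (lt : K -> K -> Prop) : Prop :=
  (forall x, ~ lt x x) /\
  (forall x y z, lt x y -> lt y z -> lt x z) /\
  (forall x y, lt x y \/ x = y \/ lt y x) /\
  (forall A : K -> Prop, (exists x, A x) ->
     exists m, A m /\ forall x, A x -> m = x \/ lt m x) /\
  (exists f : nat -> K, forall n m, f n = f m -> n = m) /\
  (* the order type is a cardinal: proper initial segments are smaller *)
  (forall x, card_lt (fun y => lt y x) (full K)) /\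
  (* regularity: every subset of size < kappa is bounded *)
  (forall A : K -> Prop, card_lt A (full K) -> exists b, forall a, A a -> lt a b).

Definition ksmall {K T : Type} (A : T -> Prop) : Prop := card_lt A (full K).

Definition baire (K : Type) := K -> K.

(* basic kappa-open sets N_eta (eta : X -> K, |X| < kappa), and the empty set *)
Definition kbasic {K : Type} (A : baire K -> Prop) : Prop :=
  (forall z, ~ A z) \/
  exists (X : K -> Prop) (g : K -> K), @ksmall K K X /\
    forall z, A z <-> (forall x, X x -> z x = g x).

Definition kbasic2 {K : Type} (A : baire K * baire K -> Prop) : Prop :=
  exists B1 B2, kbasic B1 /\ kbasic B2 /\ forall p, A p <-> (B1 (fst p) /\ B2 (snd p)).

(* kappa-open: union of at most kappa basic sets (indexed by K, repetitions allowed) *)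
Definition kopen {K S : Type} (basic : (S -> Prop) -> Prop) (A : S -> Prop) : Prop :=
  exists F : K -> S -> Prop, (forall i, basic (F i)) /\
    forall p, A p <-> exists i, F i p.

Definition kclosed {K S : Type} (basic : (S -> Prop) -> Prop) (A : S -> Prop) : Prop :=
  @kopen K S basic (fun p => ~ A p).

Inductive kBorel {K S : Type} (basic : (S -> Prop) -> Prop) : (S -> Prop) -> Prop :=
| kB_basic A : basic A -> kBorel basic A
| kB_compl A : kBorel basic A -> kBorel basic (fun p => ~ A p)
| kB_union (F : K -> S -> Prop) : (forall i, kBorel basic (F i)) ->
    kBorel basic (fun p => exists i, F i p)
| kB_inter (F : K -> S -> Prop) : (forall i, kBorel basic (F i)) ->
    kBorel basic (fun p => forall i, F i p)
| kB_ext A B : kBorel basic A -> (forall p, A p <-> B p) -> kBorel basic B.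

Inductive label (K : Type) :=
| LUnion : label K
| LInter : label K
| LLeaf : (baire K -> Prop) -> label K.
Arguments LUnion {K}.
Arguments LInter {K}.

Section Trees.
Variables (K L Node : Type) (lt : K -> K -> Prop)
          (tlt : Node -> Node -> Prop) (lab : Node -> label K).

Definition tle (x y : Node) : Prop := x = y \/ tlt x y.
Definition imm_succ (t s : Node) : Prop :=
  tlt t s /\ ~ exists u, tlt t u /\ tlt u s.
Definition is_leaf (t : Node) : Prop := ~ exists s, tlt t s.
Definition tchain (C : Node -> Prop) : Prop :=
  forall x y, C x -> C y -> x = y \/ tlt x y \/ tlt y x.

Record good_tree : Prop := {
  gt_irrefl : forall x, ~ tlt x x;
  gt_trans : forall x y z, tlt x y -> tlt y z -> tlt x z;
  gt_root : exists r, forall t, tle r t;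
  gt_pred_total : forall t, tchain (fun x => tlt x t);
  gt_pred_wf : forall t (A : Node -> Prop), (forall x, A x -> tlt x t) ->
      (exists x, A x) -> exists m, A m /\ forall x, A x -> tle m x;
  gt_no_kbranch : ~ exists f : K -> Node, forall i j, lt i j -> tlt (f i) (f j);
  gt_succ_card : forall t, card_le (imm_succ t) (full K);
  gt_size : card_le (full Node) (full L);
  gt_sup : forall C, tchain C -> (exists x, C x) ->
      exists s, (forall x, C x -> tle x s) /\
                forall u, (forall x, C x -> tle x u) -> tle s u;
  gt_lab_leaf : forall t, is_leaf t -> exists A, lab t = LLeaf A /\ kbasic A;
  gt_lab_node : forall t, ~ is_leaf t -> lab t = LUnion \/ lab t = LInter
}.

(* Strategies of II, as functions of the current position (the history of a
   play in a tree is determined by its current node): at a non-leaf node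
   labelled Union, II moves to an immediate successor. *)
Definition strategyII (sigma : Node -> Node) : Prop :=
  forall t, lab t = LUnion -> ~ is_leaf t -> imm_succ t (sigma t).

Definition consistent (sigma : Node -> Node) (t : Node) : Prop :=
  forall s, tlt s t -> lab s = LUnion -> tle (sigma s) t.

Definition winningII (sigma : Node -> Node) (xi : baire K) : Prop :=
  forall t, is_leaf t -> consistent sigma t ->
    exists A, lab t = LLeaf A /\ A xi.

Definition II_has_ws (xi : baire K) : Prop :=
  exists sigma, strategyII sigma /\ winningII sigma xi.

Definition BorelStar_code : Prop :=
  good_tree /\
  exists (D : baire K -> Prop) (pi : baire K -> Node -> Node),
    @kclosed K (baire K) kbasic D /\
    (forall eta, D eta -> strategyII (pi eta)) /\
    (forall xi, II_has_ws xi -> exists eta, D eta /\ winningII (pi eta) xi) /\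
    @kBorel K (baire K * baire K) kbasic2
      (fun p => D (snd p) /\ winningII (pi (snd p)) (fst p)).
End Trees.

(* X is (kappa,lambda)-Borel^*, lambda given as (the cardinality of) the type L *)
Definition BorelStar {K : Type} (lt : K -> K -> Prop) (L : Type)
  (X : baire K -> Prop) : Prop :=
  exists (Node : Type) (tlt : Node -> Node -> Prop) (lab : Node -> label K),
    BorelStar_code L lt tlt lab /\
    forall xi, X xi <-> II_has_ws tlt lab xi.

(* Only the tree of the Borel*-code matters.  Its nodes inject into kappa
   (|T| <= lambda <= kappa), so a strategy of II, a map from nodes to nodes,
   is coded by some eta in kappa^kappa, and X is the projection of the set C
   of pairs (xi, eta) such that eta codes a strategy winning GB(xi, T).
   C is kappa-closed: eta fails to code a strategy as soon as a single value
   eta(s) is wrong, and a coded strategy loses at xi iff it leads to some leaf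
   t with xi outside L(t).  As T has no branch of length kappa and kappa is
   regular, t has fewer than kappa predecessors, so leading to t is a basic
   open condition on eta.  Unions of kappa many kappa-open sets stay
   kappa-open because kappa x kappa injects into kappa. *)

From Stdlib Require Import Classical ClassicalEpsilon FunctionalExtensionality.
From Stdlib Require Import Relation_Operators Lexicographic_Product Inverse_Image.

Definition small (K : Type) {T : Type} (A : T -> Prop) : Prop := ~ card_le (full K) A.

Lemma card_le_full_inj {T U : Type} {A : U -> Prop} (x0 : T) :
  card_le (full T) A ->
  exists f : T -> U, (forall x, A (f x)) /\ (forall x y, f x = f y -> x = y).
Proof.
  intros [Hempty | (f & Hf & Hinj)]; [destruct (Hempty x0 I)|].
  exists f; split; intros; [apply Hf | apply Hinj]; trivial; exact I.
Qed.

Lemma retraction_of_card_le {T U : Type} (x0 : T) :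
  card_le (full T) (full U) -> exists (e : T -> U) (d : U -> T), forall x, d (e x) = x.
Proof.
  intros H; destruct (card_le_full_inj x0 H) as (e & _ & Hinj).
  exists e, (fun y => epsilon (inhabits x0) (fun x => e x = y)).
  intros x; apply Hinj, (epsilon_spec (inhabits x0) (fun x' => e x' = e x)); eauto.
Qed.

Lemma small_inj {K T U : Type} (A : T -> Prop) (B : U -> Prop) (h : T -> U) :
  (forall x, A x -> B (h x)) -> (forall x y, A x -> A y -> h x = h y -> x = y) ->
  small K B -> small K A.
Proof.
  intros HAB Hinj HB [Hempty | (g & Hg & Hginj)]; apply HB; [left; exact Hempty | right].
  exists (fun k => h (g k)); split.
  - intros k _; apply HAB, Hg; exact I.
  - intros k k' _ _ E; apply Hginj; try exact I.
    apply Hinj; trivial; apply Hg; exact I.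
Qed.

Lemma small_sub {K T : Type} (A B : T -> Prop) :
  (forall x, A x -> B x) -> small K B -> small K A.
Proof. intros HAB; apply (small_inj A B (fun x => x)); auto. Qed.

Lemma small_image {K T U : Type} (A : T -> Prop) (f : T -> U) :
  small K A -> small K (fun y => exists x, A x /\ f x = y).
Proof.
  intros HA [Hempty | (g & Hg & Hginj)]; apply HA; [left; exact Hempty | right].
  destruct (choice (fun k x => A x /\ f x = g k)) as [pre Hpre].
  { intros k; apply Hg; exact I. }
  exists pre; split.
  - intros k _; apply Hpre.
  - intros k k' _ _ E; apply Hginj; try exact I.
    rewrite <- (proj2 (Hpre k)), <- (proj2 (Hpre k')), E; reflexivity.
Qed.

(* Transfinite recursion with choice; [Q p f] may only depend on [f] below [p]. *)
Lemma wf_rec_choice {T A : Type} (R : T -> T -> Prop) (Q : T -> (T -> A) -> A -> Prop) :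
  well_founded R -> inhabited A ->
  (forall p f f', (forall q, R q p -> f q = f' q) -> forall a, Q p f a -> Q p f' a) ->
  exists f : T -> A, forall p, (exists a, Q p f a) -> Q p f (f p).
Proof.
  intros Rwf [a0] Qlocal.
  pose (restrict := fun p (rec : forall q, R q p -> A) q =>
    match excluded_middle_informative (R q p) with left h => rec q h | right _ => a0 end).
  pose (step := fun p rec => epsilon (inhabits a0) (Q p (restrict p rec))).
  pose (f := Fix Rwf (fun _ => A) step).
  assert (restrict_f : forall p q, R q p -> restrict p (fun q _ => f q) q = f q).
  { intros p q Hq; unfold restrict.
    destruct (excluded_middle_informative _); [reflexivity | contradiction]. }
  assert (f_eq : forall p, f p = step p (fun q _ => f q)).
  { intros p; apply (Fix_eq Rwf (fun _ => A) step); intros x g g' Hg; unfold step.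
    replace (restrict x g') with (restrict x g); [reflexivity|].
    apply functional_extensionality; intros q; unfold restrict.
    destruct (excluded_middle_informative _); auto. }
  exists f; intros p [a Ha]; rewrite (f_eq p).
  apply (Qlocal p (restrict p (fun q _ => f q))); [exact (restrict_f p)|].
  apply (epsilon_spec (inhabits a0)); exists a.
  apply (Qlocal p f); [|exact Ha].
  intros q Hq; symmetry; apply restrict_f, Hq.
Qed.

Section RegularCardinal.

Context {K : Type} {lt : K -> K -> Prop} (hK : regular_cardinal lt).

Lemma lt_irrefl x : ~ lt x x.
Proof. apply hK. Qed.

Lemma lt_trans x y z : lt x y -> lt y z -> lt x z.
Proof. apply hK. Qed.

Lemma lt_trichotomy x y : lt x y \/ x = y \/ lt y x.
Proof. apply hK. Qed.

Lemma lt_wf : well_founded lt.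
Proof.
  intros x; apply NNPP; intros Hx.
  destruct hK as (_ & _ & _ & Hmin & _).
  destruct (Hmin (fun y => ~ Acc lt y)) as (m & Hm & Hleast); [eauto|].
  apply Hm; constructor; intros y Hy; apply NNPP; intros Hny.
  destruct (Hleast y Hny) as [<- | Hmy]; eapply lt_irrefl; [exact Hy | eapply lt_trans; eauto].
Qed.

Lemma nat_inj_K : exists f : nat -> K, forall n m, f n = f m -> n = m.
Proof. apply hK. Qed.

Lemma K_inhabited : inhabited K.
Proof. destruct nat_inj_K as [f _]; exact (inhabits (f 0)). Qed.

Lemma seg_small x : small K (fun y => lt y x).
Proof. apply hK. Qed.

Lemma small_bounded (A : K -> Prop) : small K A -> exists b, forall a, A a -> lt a b.
Proof.
  intros HA; apply hK; split; [|exact HA].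
  right; exists (fun x => x); split; [intros; exact I | auto].
Qed.

Lemma small_not_full (A : K -> Prop) : small K A -> exists k, ~ A k.
Proof.
  intros HA; apply NNPP; intros Hfull; apply HA; right.
  exists (fun x => x); split; [|auto].
  intros k _; apply NNPP; intros Hk; apply Hfull; eauto.
Qed.

Lemma small_bool : small K (full bool).
Proof.
  destruct nat_inj_K as [f Hf].
  intros H; destruct (card_le_full_inj (f 0) H) as (g & _ & Hg).
  assert (Hgf : forall n m, g (f n) = g (f m) -> n = m) by auto.
  destruct (g (f 0)) eqn:E0, (g (f 1)) eqn:E1, (g (f 2)) eqn:E2;
  first [ assert (0 = 1) by (apply Hgf; congruence)
        | assert (0 = 2) by (apply Hgf; congruence)
        | assert (1 = 2) by (apply Hgf; congruence) ]; discriminate.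
Qed.

Lemma small_single {T : Type} (a : T) : small K (fun y => y = a).
Proof.
  apply (small_inj _ (full bool) (fun _ => true)); [intros; exact I | congruence |].
  exact small_bool.
Qed.

Lemma lt_unbounded m : exists b, lt m b.
Proof.
  destruct (small_bounded _ (small_single m)) as [b Hb]; eauto.
Qed.

(* Regularity: if [Y] were as large as [K], the fibres of a choice of indices
   over [K] would be bounded, and so would the bounds; an element above all
   the bounds would then lie strictly below the bound of its own fibre. *)
Lemma small_union {T U : Type} (I : T -> Prop) (B : T -> U -> Prop) (Y : U -> Prop) :
  small K I -> (forall j, I j -> small K (B j)) ->
  (forall y, Y y -> exists j, I j /\ B j y) -> small K Y.
Proof.
  intros HI HB HY H.
  destruct K_inhabited as [k0].
  destruct (card_le_full_inj k0 H) as (g & Hg & Hginj).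
  destruct (choice (fun k j => I j /\ B j (g k))) as [idx Hidx].
  { intros k; apply HY, Hg. }
  destruct (choice (fun j b => I j -> forall k, idx k = j -> lt k b)) as [bound Hbound].
  { intros j; destruct (classic (I j)) as [Ij | nIj]; [|exists k0; tauto].
    destruct (small_bounded (fun k => idx k = j)) as [b Hb]; [|eauto].
    apply (small_inj _ (B j) g); [intros k <-; apply Hidx | auto | apply HB, Ij]. }
  destruct (small_bounded _ (small_image I bound HI)) as [M HM].
  apply (lt_irrefl M), (lt_trans _ (bound (idx M))).
  - apply Hbound; [apply Hidx | reflexivity].
  - apply HM; exists (idx M); split; [apply Hidx | reflexivity].
Qed.

Lemma small_union2 {T : Type} (A B : T -> Prop) :
  small K A -> small K B -> small K (fun x => A x \/ B x).
Proof.
  intros HA HB.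
  apply (small_union (full bool) (fun (b : bool) => if b then A else B)).
  - exact small_bool.
  - intros []; auto.
  - intros x [Hx | Hx]; [exists true | exists false]; split; trivial; exact I.
Qed.

Lemma small_prod {T U : Type} (A : T -> Prop) (B : U -> Prop) :
  small K A -> small K B -> small K (fun q => A (fst q) /\ B (snd q)).
Proof.
  intros HA HB.
  apply (small_union A (fun a q => fst q = a /\ B (snd q))); [exact HA| |].
  - intros a _; apply (small_inj _ B snd); [intros q [_ Hq]; exact Hq | | exact HB].
    intros [x y] [x' y'] [E _] [E' _] Ey; simpl in *; subst; reflexivity.
  - intros q [Hq1 Hq2]; eauto.
Qed.

Lemma inj_of_small_segments {T : Type} (R : T -> T -> Prop) :
  well_founded R -> (forall p q, p = q \/ R p q \/ R q p) ->
  (forall p, small K (fun q => R q p)) ->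
  exists f : T -> K, forall p q, f p = f q -> p = q.
Proof.
  intros Rwf Rtot Rsmall.
  destruct (wf_rec_choice R (fun p f k => forall q, R q p -> f q <> k) Rwf K_inhabited)
    as [f f_fresh].
  { intros p f f' Hff' k Hk q Hq; rewrite <- Hff'; auto. }
  assert (f_fresh' : forall p q, R q p -> f q <> f p).
  { intros p; apply f_fresh.
    destruct (small_not_full _ (small_image _ f (Rsmall p))) as [k Hk].
    exists k; intros q Hq E; apply Hk; eauto. }
  exists f; intros p q E.
  destruct (Rtot p q) as [| [Hpq | Hqp]]; trivial.
  - destruct (f_fresh' q p Hpq E).
  - destruct (f_fresh' p q Hqp (eq_sym E)).
Qed.

Definition pmax (p : K * K) : K :=
  if excluded_middle_informative (lt (fst p) (snd p)) then snd p else fst p.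

(* The canonical well-order of [K * K]: by the maximum, then
   lexicographically.  Its initial segments lie in squares
   [{a | lt a b} * {a | lt a b}], hence are small. *)
Definition pair_lt (q p : K * K) : Prop :=
  slexprod K (K * K) lt (slexprod K K lt lt) (pmax q, q) (pmax p, p).

Lemma pmax_ge p :
  (fst p = pmax p \/ lt (fst p) (pmax p)) /\ (snd p = pmax p \/ lt (snd p) (pmax p)).
Proof.
  unfold pmax; destruct (excluded_middle_informative _) as [H | H]; split; auto.
  destruct (lt_trichotomy (fst p) (snd p)) as [| [E | Hlt]]; [tauto | left; congruence | tauto].
Qed.

Lemma slexprod_trichotomy {A B : Type} (RA : A -> A -> Prop) (RB : B -> B -> Prop) :
  (forall x y, RA x y \/ x = y \/ RA y x) -> (forall x y, RB x y \/ x = y \/ RB y x) ->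
  forall p q, slexprod A B RA RB p q \/ p = q \/ slexprod A B RA RB q p.
Proof.
  intros HA HB [x y] [x' y'].
  destruct (HA x x') as [H | [<- | H]];
    [left; constructor; exact H | | right; right; constructor; exact H].
  destruct (HB y y') as [H | [<- | H]];
    [left; constructor 2; exact H | auto | right; right; constructor 2; exact H].
Qed.

Lemma pair_lt_wf : well_founded pair_lt.
Proof.
  apply (wf_inverse_image _ _ _ (fun p => (pmax p, p))).
  apply wf_slexprod; [exact lt_wf|].
  apply wf_slexprod; exact lt_wf.
Qed.

Lemma pair_lt_total p q : p = q \/ pair_lt p q \/ pair_lt q p.
Proof.
  destruct (slexprod_trichotomy _ _ lt_trichotomy
              (slexprod_trichotomy _ _ lt_trichotomy lt_trichotomy) (pmax p, p) (pmax q, q))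
    as [H | [E | H]]; unfold pair_lt; [tauto | | tauto].
  left; congruence.
Qed.

Lemma pair_lt_segment_small p : small K (fun q => pair_lt q p).
Proof.
  destruct (lt_unbounded (pmax p)) as [b Hb].
  apply (small_sub _ (fun q => lt (fst q) b /\ lt (snd q) b)).
  - intros q Hq.
    assert (Hqb : lt (pmax q) b).
    { inversion Hq as [x x' y y' Hlt | x y y' Hlt]; [eapply lt_trans; eauto | congruence]. }
    destruct (pmax_ge q) as [[E1 | H1] [E2 | H2]];
      split; try rewrite E1; try rewrite E2; eauto using lt_trans.
  - apply (small_prod (fun a => lt a b) (fun a => lt a b)); apply seg_small.
Qed.

Lemma pairing_surj : exists up : K -> K * K, forall q, exists k, up k = q.
Proof.
  destruct (inj_of_small_segments pair_lt pair_lt_wf pair_lt_total pair_lt_segment_small)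
    as [pr Hpr].
  destruct K_inhabited as [k0].
  exists (fun k => epsilon (inhabits (k0, k0)) (fun q => pr q = k)); intros q.
  exists (pr q); apply Hpr.
  apply (epsilon_spec (inhabits (k0, k0)) (fun q' => pr q' = pr q)); eauto.
Qed.

End RegularCardinal.

Section OpenSets.

Context {K : Type} {lt : K -> K -> Prop} (hK : regular_cardinal lt).
Context {S : Type} (basic : (S -> Prop) -> Prop).

Lemma kopen_ext (A B : S -> Prop) :
  (forall p, A p <-> B p) -> @kopen K S basic A -> @kopen K S basic B.
Proof.
  intros HAB (F & HF & HA); exists F; split; trivial.
  intros p; rewrite <- HAB; apply HA.
Qed.

Lemma kopen_empty : basic (fun _ => False) -> @kopen K S basic (fun _ => False).
Proof.
  intros H; exists (fun _ _ => False); split; [trivial|].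
  intros p; split; [intros [] | intros [_ []]].
Qed.

Lemma kopen_of_basic (A : S -> Prop) : basic A -> @kopen K S basic A.
Proof.
  intros HA; destruct (K_inhabited hK) as [k0].
  exists (fun _ => A); split; [trivial|].
  intros p; split; [exists k0; trivial | intros [_ H]; exact H].
Qed.

Lemma kopen_Union (U : K -> S -> Prop) :
  (forall i, @kopen K S basic (U i)) -> @kopen K S basic (fun p => exists i, U i p).
Proof.
  intros HU; destruct (choice _ HU) as [F HF].
  destruct (pairing_surj hK) as [up Hup].
  exists (fun k => F (fst (up k)) (snd (up k))); split.
  - intros k; apply HF.
  - intros p; split.
    + intros [i Hi]; apply HF in Hi as [j Hj].
      destruct (Hup (i, j)) as [k Hk]; exists k; rewrite Hk; exact Hj.
    + intros [k Hk]; exists (fst (up k)); apply HF; eauto.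
Qed.

Lemma kopen_bigunion {T : Type} (I : T -> Prop) (U : T -> S -> Prop) :
  basic (fun _ => False) -> card_le I (full K) ->
  (forall j, I j -> @kopen K S basic (U j)) ->
  @kopen K S basic (fun p => exists j, I j /\ U j p).
Proof.
  intros Hempty [noI | (h & _ & Hh)] HU.
  { apply (kopen_ext (fun _ => False)); [firstorder | exact (kopen_empty Hempty)]. }
  apply (kopen_ext (fun p => exists k, exists j, I j /\ h j = k /\ U j p));
    [firstorder subst; eauto|].
  apply kopen_Union; intros k.
  destruct (classic (exists j, I j /\ h j = k)) as [(j & Ij & <-) | nohit].
  - apply (kopen_ext (U j)); [|apply HU, Ij].
    intros p; split; [eauto|].
    intros (j' & Ij' & E & Hp); rewrite (Hh j j') by auto; exact Hp.
  - apply (kopen_ext (fun _ => False)); [firstorder | exact (kopen_empty Hempty)].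
Qed.

Lemma kopen_union2 (A B : S -> Prop) :
  basic (fun _ => False) -> @kopen K S basic A -> @kopen K S basic B ->
  @kopen K S basic (fun p => A p \/ B p).
Proof.
  intros Hempty HA HB.
  apply (kopen_ext (fun p => exists b : bool, full bool b /\ (if b then A else B) p)).
  { intros p; split; [intros [[] [_ H]]; auto|].
    intros [H | H]; [exists true | exists false]; split; trivial; exact I. }
  apply kopen_bigunion; [exact Hempty | | intros []; auto].
  destruct (nat_inj_K hK) as [f Hf].
  right; exists (fun b : bool => if b then f 0 else f 1); split; [intros; exact I|].
  intros [] [] _ _ E; trivial; apply Hf in E; discriminate.
Qed.

End OpenSets.

Lemma ksmall_of_small {K : Type} (A : K -> Prop) : small K A -> @ksmall K K A.
Proof.
  intros HA; split; [|exact HA].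
  right; exists (fun x => x); split; [intros; exact I | auto].
Qed.

Section BasicSets.

Context {K : Type} {lt : K -> K -> Prop} (hK : regular_cardinal lt).

Lemma kbasic_empty : @kbasic K (fun _ => False).
Proof. left; auto. Qed.

Lemma kbasic_full : @kbasic K (fun _ => True).
Proof.
  right; exists (fun _ => False), (fun x => x); split; [|firstorder].
  destruct (K_inhabited hK) as [k0].
  apply ksmall_of_small, (small_sub _ (fun x => x = k0));
    [contradiction | exact (small_single hK k0)].
Qed.

Lemma kbasic_coord (x v : K) : @kbasic K (fun z => z x = v).
Proof.
  right; exists (fun y => y = x), (fun _ => v); split.
  - apply ksmall_of_small, (small_single hK).
  - intros z; split; [intros E y ->; exact E | intros H; apply H; reflexivity].
Qed.

Lemma kopen_kbasic_compl (A : baire K -> Prop) :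
  kbasic A -> @kopen K _ kbasic (fun z => ~ A z).
Proof.
  intros [noA | (X & g & _ & HA)].
  - apply (kopen_ext _ (fun _ => True)); [firstorder|].
    apply (kopen_of_basic hK), kbasic_full.
  - apply (kopen_ext _ (fun z => exists x, exists v, (X x /\ v <> g x) /\ z x = v)).
    + intros z; rewrite HA; split.
      * intros (x & v & [Xx Hv] & <-) Hz; exact (Hv (Hz x Xx)).
      * intros Hz; apply not_all_ex_not in Hz as [x Hx].
        apply imply_to_and in Hx as [Xx Hx]; eauto.
    + apply (kopen_Union hK); intros x; apply (kopen_Union hK); intros v.
      destruct (classic (X x /\ v <> g x)) as [Hxv | Hxv].
      * apply (kopen_ext _ (fun z => z x = v)); [tauto|].
        apply (kopen_of_basic hK), kbasic_coord.
      * apply (kopen_ext _ (fun _ => False)); [tauto | apply kopen_empty, kbasic_empty].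
Qed.

Lemma kbasic2_empty : @kbasic2 K (fun _ => False).
Proof.
  exists (fun _ => False), (fun _ => False).
  split; [|split]; [left; auto | left; auto | tauto].
Qed.

Lemma kopen_prod (U V : baire K -> Prop) :
  @kopen K _ kbasic U -> kbasic V -> @kopen K _ kbasic2 (fun p => U (fst p) /\ V (snd p)).
Proof.
  intros (F & HF & HU) HV.
  exists (fun i p => F i (fst p) /\ V (snd p)); split.
  - intros i; exists (F i), V; split; [|split]; trivial; tauto.
  - intros p; rewrite HU; split; [intros [[i Hi] Hv] | intros [i [Hi Hv]]]; eauto.
Qed.

End BasicSets.

Section Trees.

Context {K L Node : Type} {lt : K -> K -> Prop} {tlt : Node -> Node -> Prop}
  {lab : Node -> label K}.
Context (hK : regular_cardinal lt) (G : good_tree L lt tlt lab).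

Lemma imm_succ_below s t : tlt s t -> exists u, imm_succ tlt s u /\ tle tlt u t.
Proof.
  pose proof (gt_trans G) as tlt_trans.
  intros Hst; destruct (classic (exists x, tlt s x /\ tlt x t)) as [Hx | Hx].
  - destruct (gt_pred_wf G (t := t) (A := fun x => tlt s x /\ tlt x t))
      as (m & [Hsm Hmt] & Hleast); [tauto | exact Hx |].
    exists m; split; [split; trivial | right; exact Hmt].
    intros (v & Hsv & Hvm).
    destruct (Hleast v) as [<- | Hmv]; [split; eauto | |];
      eapply (gt_irrefl G); eauto.
  - exists t; split; [split; trivial | left; reflexivity].
Qed.

Lemma imm_succ_below_unique s t u u' :
  imm_succ tlt s u -> imm_succ tlt s u' -> tle tlt u t -> tle tlt u' t -> u = u'.
Proof.
  intros [Hsu Hu] [Hsu' Hu'] [<- | Hut] [E' | Hu't]; subst; trivial.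
  - destruct Hu; eauto.
  - destruct Hu'; eauto.
  - destruct (gt_pred_total G Hut Hu't) as [| [Hlt | Hlt]]; trivial;
      [destruct Hu' | destruct Hu]; eauto.
Qed.

Lemma small_tle s : small K (fun x => tlt x s) -> small K (fun x => tle tlt x s).
Proof.
  intros Hs; apply (small_sub _ (fun x => tlt x s \/ x = s)); [intros x [-> | H]; auto|].
  apply (small_union2 hK); [exact Hs | apply (small_single hK)].
Qed.

(* Each stage of the recursion succeeds because, by regularity, fewer than
   [kappa] predecessors of [u] lie below the terms already chosen. *)
Lemma kbranch_of_large_pred u :
  ~ small K (fun s => tlt s u) -> (forall s, tlt s u -> small K (fun x => tlt x s)) ->
  exists f : K -> Node, forall i j, lt i j -> tlt (f i) (f j).
Proof.
  intros Hu Hbelow.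
  destruct (wf_rec_choice lt (fun i f x => tlt x u /\ forall j, lt j i -> tlt (f j) x)
              (lt_wf hK) (inhabits u)) as [f Hf].
  { intros i f f' Hff' x [Hxu Hx]; split; [exact Hxu|].
    intros j Hj; rewrite <- Hff'; auto. }
  assert (Hinc : forall i, tlt (f i) u /\ forall j, lt j i -> tlt (f j) (f i)).
  { intros i; induction i as [i IH] using (well_founded_ind (lt_wf hK)).
    apply Hf, NNPP; intros Hnone; apply Hu.
    apply (small_union hK (fun j => lt j i) (fun j x => tle tlt x (f j))).
    - apply (seg_small hK).
    - intros j Hj; apply small_tle, Hbelow, (IH j Hj).
    - intros x Hxu; apply NNPP; intros Hx; apply Hnone.
      exists x; split; [exact Hxu|]; intros j Hj.
      destruct (gt_pred_total G Hxu (proj1 (IH j Hj))) as [E | [Hlt | Hlt]];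
        [| | exact Hlt]; exfalso; apply Hx; exists j; split; trivial;
        [left | right]; trivial. }
  exists f; intros i j Hij; apply (Hinc j), Hij.
Qed.

Lemma pred_small t : small K (fun s => tlt s t).
Proof.
  pose proof (gt_trans G) as tlt_trans.
  apply NNPP; intros Ht; apply (gt_no_kbranch G).
  destruct (classic (exists x, tlt x t /\ ~ small K (fun s => tlt s x))) as [Hx | Hx].
  - destruct (gt_pred_wf G (t := t) (A := fun x => tlt x t /\ ~ small K (fun s => tlt s x)))
      as (m & [Hmt Hm] & Hleast); [tauto | exact Hx |].
    apply (kbranch_of_large_pred m Hm); intros s Hsm; apply NNPP; intros Hs.
    destruct (Hleast s) as [<- | Hms]; [split; eauto | |];
      eapply (gt_irrefl G); eauto.
  - apply (kbranch_of_large_pred t Ht); intros s Hst; apply NNPP; eauto.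
Qed.

End Trees.

Section StrategyCodes.

Context {K L Node : Type} {lt : K -> K -> Prop} {tlt : Node -> Node -> Prop}
  {lab : Node -> label K}.
Context (hK : regular_cardinal lt) (G : good_tree L lt tlt lab).
Context (e : Node -> K) (d : K -> Node) (d_e : forall t, d (e t) = t).

Lemma code_inj s t : e s = e t -> s = t.
Proof. intros E; rewrite <- (d_e s), <- (d_e t), E; reflexivity. Qed.

Lemma card_le_code (I : Node -> Prop) : card_le I (full K).
Proof. right; exists e; split; [intros; exact Logic.I | intros x y _ _; apply code_inj]. Qed.

(* [eta] codes the strategy [decode eta]: it maps the code [e s] of a node to
   the code of II's move at [s]. *)
Definition codes_strategy (eta : baire K) : Prop :=
  forall s, lab s = LUnion -> ~ is_leaf tlt s -> exists u, imm_succ tlt s u /\ eta (e s) = e u.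

Definition decode (eta : baire K) : Node -> Node := fun s => d (eta (e s)).

Definition encode (sigma : Node -> Node) : baire K := fun k => e (sigma (d k)).

Definition wins_by_code (p : baire K * baire K) : Prop :=
  codes_strategy (snd p) /\ winningII tlt lab (decode (snd p)) (fst p).

Definition step_toward (s t : Node) : Node :=
  epsilon (inhabits t) (fun u => imm_succ tlt s u /\ tle tlt u t).

Definition leads_to (eta : baire K) (t : Node) : Prop :=
  forall s, tlt s t -> lab s = LUnion -> eta (e s) = e (step_toward s t).

Lemma step_toward_spec s t :
  tlt s t -> imm_succ tlt s (step_toward s t) /\ tle tlt (step_toward s t) t.
Proof.
  intros Hst; unfold step_toward.
  apply (epsilon_spec (inhabits t) (fun u => imm_succ tlt s u /\ tle tlt u t)).
  exact (imm_succ_below G s t Hst).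
Qed.

Lemma decode_strategy eta : codes_strategy eta -> strategyII tlt lab (decode eta).
Proof.
  intros Heta s Hs Hnl; destruct (Heta s Hs Hnl) as (u & Hu & E).
  unfold decode; rewrite E, d_e; exact Hu.
Qed.

Lemma encode_strategy sigma : strategyII tlt lab sigma -> codes_strategy (encode sigma).
Proof.
  intros Hsigma s Hs Hnl; exists (sigma s); split; [apply Hsigma; trivial|].
  unfold encode; rewrite d_e; reflexivity.
Qed.

Lemma decode_encode sigma : decode (encode sigma) = sigma.
Proof.
  apply functional_extensionality; intros s; unfold decode, encode.
  rewrite !d_e; reflexivity.
Qed.

Lemma II_has_ws_iff_code xi : II_has_ws tlt lab xi <-> exists eta, wins_by_code (xi, eta).
Proof.
  split.
  - intros (sigma & Hsigma & Hwin); exists (encode sigma); split; simpl.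
    + apply encode_strategy, Hsigma.
    + rewrite decode_encode; exact Hwin.
  - intros (eta & Heta & Hwin); exists (decode eta); split; [apply decode_strategy|]; assumption.
Qed.

Lemma consistent_decode_iff eta t :
  codes_strategy eta -> consistent tlt lab (decode eta) t <-> leads_to eta t.
Proof.
  intros Heta; split; intros Ht s Hst Hs;
    (assert (Hnl : ~ is_leaf tlt s) by (intros Hl; apply Hl; exists t; exact Hst));
    destruct (Heta s Hs Hnl) as (u & Hu & E);
    destruct (step_toward_spec s t Hst) as [Hstep Hstep_t];
    pose proof (Ht s Hst Hs) as Hts; unfold decode in *; rewrite E, d_e in *.
  - rewrite (imm_succ_below_unique G s t u (step_toward s t)); trivial.
  - apply code_inj in Hts; subst u; exact Hstep_t.
Qed.

Lemma not_wins_by_code_iff xi eta :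
  ~ wins_by_code (xi, eta) <->
  ~ codes_strategy eta \/
  exists t, is_leaf tlt t /\ ~ (exists A, lab t = LLeaf A /\ A xi) /\ leads_to eta t.
Proof.
  unfold wins_by_code, winningII; simpl; split.
  - intros Hlose; destruct (classic (codes_strategy eta)) as [Heta | Heta];
      [right | left; exact Heta].
    apply NNPP; intros Hnot; apply Hlose; split; [exact Heta|].
    intros t Hl Hc; apply NNPP; intros HA; apply Hnot.
    exists t; split; [exact Hl|]; split; [exact HA|].
    apply consistent_decode_iff; assumption.
  - intros [Heta | (t & Hl & HA & Ht)] [Heta' Hwin]; [contradiction|].
    apply HA, Hwin, consistent_decode_iff; assumption.
Qed.

Lemma not_codes_strategy_open : @kopen K _ kbasic2 (fun p => ~ codes_strategy (snd p)).
Proof.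
  apply (kopen_ext _ (fun p => exists s, (lab s = LUnion /\ ~ is_leaf tlt s) /\
            exists v, (~ exists u, imm_succ tlt s u /\ e u = v) /\ snd p (e s) = v)).
  { intros [xi eta]; simpl; split.
    - intros (s & [Hs Hnl] & v & Hv & E) Heta.
      destruct (Heta s Hs Hnl) as (u & Hu & Eu); apply Hv; exists u; split; congruence.
    - intros Heta; apply NNPP; intros Hall; apply Heta; intros s Hs Hnl.
      apply NNPP; intros Hno; apply Hall; exists s; split; [split; assumption|].
      exists (eta (e s)); split; [|reflexivity].
      intros (u & Hu & E); apply Hno; exists u; split; congruence. }
  apply (kopen_bigunion hK); [exact kbasic2_empty | apply card_le_code |].
  intros s _; apply (kopen_Union hK); intros v.
  destruct (classic (~ exists u, imm_succ tlt s u /\ e u = v)) as [Hv | Hv].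
  - apply (kopen_ext _ (fun p => snd p (e s) = v)); [tauto|].
    apply (kopen_of_basic hK); exists (fun _ => True), (fun z => z (e s) = v).
    split; [exact (kbasic_full hK)|]; split; [exact (kbasic_coord hK (e s) v) | tauto].
  - apply (kopen_ext _ (fun _ => False)); [tauto | apply kopen_empty, kbasic2_empty].
Qed.

(* Fewer than [kappa] nodes lie below [t], so this only constrains [eta] on
   a small set of coordinates. *)
Lemma leads_to_basic t : @kbasic K (fun eta => leads_to eta t).
Proof.
  right; exists (fun k => exists s, (tlt s t /\ lab s = LUnion) /\ e s = k),
               (fun k => e (step_toward (d k) t)); split.
  - apply ksmall_of_small, small_image.
    apply (small_sub _ (fun s => tlt s t)); [tauto | apply (pred_small hK G)].
  - intros eta; split.
    + intros Ht k (s & [Hst Hs] & <-); rewrite d_e; apply Ht; assumption.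
    + intros Ht s Hst Hs; rewrite <- (d_e s) at 2; apply Ht; eauto.
Qed.

Lemma losing_leaf_open t :
  is_leaf tlt t ->
  @kopen K _ kbasic2 (fun p => ~ (exists A, lab t = LLeaf A /\ A (fst p)) /\ leads_to (snd p) t).
Proof.
  intros Hl; destruct (gt_lab_leaf G Hl) as (A & EA & HA).
  apply (kopen_ext _ (fun p => ~ A (fst p) /\ leads_to (snd p) t)).
  { intros p; rewrite EA; split; [intros [HnA Ht]; split; [intros (B & EB & HB)|]|]; trivial.
    - injection EB as <-; contradiction.
    - intros [HnA Ht]; split; [intros HAp; apply HnA; eauto | exact Ht]. }
  apply (kopen_prod (fun z => ~ A z) (fun eta => leads_to eta t));
    [apply (kopen_kbasic_compl hK), HA | apply leads_to_basic].
Qed.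

Lemma wins_by_code_closed : @kclosed K _ kbasic2 wins_by_code.
Proof.
  apply (kopen_ext _ (fun p => ~ codes_strategy (snd p) \/
     exists t, is_leaf tlt t /\ ~ (exists A, lab t = LLeaf A /\ A (fst p)) /\ leads_to (snd p) t)).
  { intros [xi eta]; symmetry; apply not_wins_by_code_iff. }
  apply (kopen_union2 hK); [exact kbasic2_empty | exact not_codes_strategy_open |].
  apply (kopen_bigunion hK); [exact kbasic2_empty | apply card_le_code | exact losing_leaf_open].
Qed.

End StrategyCodes.

Theorem corollary3p5 (K : Type) (lt : K -> K -> Prop) (L : Type)
  (hK : regular_cardinal lt) (hL : card_le (full L) (full K))
  (X : baire K -> Prop) (hX : BorelStar lt L X) :
  exists C : baire K * baire K -> Prop,
    @kclosed K (baire K * baire K) kbasic2 C /\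
    forall xi, X xi <-> exists eta, C (xi, eta).
Proof.
  destruct hX as (Node & tlt & lab & [G _] & HX).
  destruct (gt_root G) as [r _].
  destruct (retraction_of_card_le r (gt_size G)) as (e1 & d1 & d1_e1).
  destruct (retraction_of_card_le (e1 r) hL) as (e2 & d2 & d2_e2).
  pose (e := fun t => e2 (e1 t)); pose (d := fun k => d1 (d2 k)).
  assert (d_e : forall t, d (e t) = t)
    by (intros t; unfold d, e; rewrite d2_e2, d1_e1; reflexivity).
  exists (wins_by_code (tlt := tlt) (lab := lab) e d); split.
  - exact (wins_by_code_closed hK G e d d_e).
  - intros xi; rewrite HX; exact (II_has_ws_iff_code e d d_e xi).
Qed.
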